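(* Let $a_{01}^0(u)=64u^3\sin2u+48u^2\cos2u-44u\sin2u-4u\cos u\sin2u+3\cos2u-3\cos6u$ and let $F[a_{01}^0]=\inf\{u>0:a_{01}^0(u)=0\}$. Then $F[a_{01}^0]\in(\frac34\pi,\pi)$, and $a_{01}^0(u)<0$ for all $u\in(0,F[a_{01}^0])$. *)

From Stdlib Require Import Reals.
Open Scope R_scope.

Definition a010 (u : R) : R :=
  64 * u ^ 3 * sin (2 * u) + 48 * u ^ 2 * cos (2 * u) - 44 * u * sin (2 * u)
  - 4 * u * cos u * sin (2 * u) + 3 * cos (2 * u) - 3 * cos (6 * u).

Definition a010_pos_zeros (u : R) : Prop := 0 < u /\ a010 u = 0.

Definition is_infimum (S : R -> Prop) (m : R) : Prop :=
  (forall x, S x -> m <= x) /\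
  (forall m', (forall x, S x -> m' <= x) -> m' <= m).

(* By the double-angle formulas, with s = sin 2u,
     a(u) = s (64u^3 - 44u - 4u cos u) + 12 cos 2u (4u^2 + s^2).
   On (0, 3/4], bounding cos u from below and cos 2u from above by their Taylor
   polynomials turns this into a convex quadratic in s, which is negative at both
   Taylor bounds of s = sin 2u and hence at s itself.  On [3/4, 59/20] the function
   is enclosed, cell by cell of width 1/40, by outward-rounded rational interval
   arithmetic, sin and cos at the grid points being propagated by the addition
   formulas.  As a(pi) = 48 pi^2 > 0, the intermediate value theorem gives a zero in
   (59/20, pi), so the first positive zero F satisfies 3pi/4 < 59/20 <= F < pi. *)

From Stdlib Require Import Reals QArith Qreals Qround Qminmax Lra Lia Psatz Machin.
Open Scope R_scope.

Lemma convex_quadratic_neg_between a b c lo hi s : 0 <= a -> lo <= s <= hi ->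
  a * lo ^ 2 + b * lo + c < 0 -> a * hi ^ 2 + b * hi + c < 0 -> a * s ^ 2 + b * s + c < 0.
Proof.
  intros Ha [Hlo Hhi] Plo Phi.
  assert (Hinterp : (hi - lo) * (a * s ^ 2 + b * s + c)
    = (hi - s) * (a * lo ^ 2 + b * lo + c) + (s - lo) * (a * hi ^ 2 + b * hi + c)
      - a * ((s - lo) * (hi - s)) * (hi - lo)) by ring.
  assert (0 <= a * ((s - lo) * (hi - s))) by (apply Rmult_le_pos; nra).
  destruct (Rle_lt_dec s lo); [replace s with lo by lra; exact Plo | nra].
Qed.

Lemma sin_taylor_bounds x : 0 <= x <= 4 -> x - x ^ 3 / 6 <= sin x <= x - x ^ 3 / 6 + x ^ 5 / 120.
Proof.
  intros [H0 H4]. destruct (pre_sin_bound x 0 H0 H4) as [L U].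
  unfold sin_approx, sin_term in L, U. simpl in L, U. split; lra.
Qed.

Lemma cos_taylor_bounds x : -2 <= x <= 2 -> 1 - x ^ 2 / 2 <= cos x <= 1 - x ^ 2 / 2 + x ^ 4 / 24.
Proof.
  intros [H0 H2]. destruct (pre_cos_bound x 0 H0 H2) as [L U].
  unfold cos_approx, cos_term in L, U. simpl in L, U. split; lra.
Qed.

Lemma PI_le_68_21 : PI <= 68 / 21.
Proof.
  destruct (PI_2_3_7_ineq 0) as [_ H].
  unfold tg_alt, PI_2_3_7_tg, Ratan_seq in H. simpl in H. lra.
Qed.

Lemma zero_between f b u : continuity f -> b < u -> f b < 0 -> 0 <= f u ->
  exists z, b < z <= u /\ f z = 0.
Proof.
  intros Hf Hbu Hb [Hu | Hu].
  - destruct (IVT f b u Hf Hbu Hb Hu) as (z & Hz & Hfz).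
    exists z. split; [| exact Hfz].
    destruct Hz as [[Hbz | <-] Hzu]; lra.
  - exists u. split; [lra | auto].
Qed.

Lemma infimum_exists (S : R -> Prop) x0 b :
  S x0 -> (forall x, S x -> b <= x) -> exists m, is_infimum S m.
Proof.
  intros Hx0 Hb.
  destruct (completeness (fun y => S (- y))) as (m & Hub & Hlub).
  - exists (- b). intros y Hy. specialize (Hb _ Hy). lra.
  - exists (- x0). rewrite Ropp_involutive. exact Hx0.
  - exists (- m). split.
    + intros x Hx.
      assert (- x <= m) by (apply Hub; cbv beta; rewrite Ropp_involutive; exact Hx).
      lra.
    + intros m' Hm'. assert (m <= - m') by (apply Hlub; intros y Hy; specialize (Hm' _ Hy); lra).
      lra.
Qed.

Lemma first_positive_zero f b c : continuity f -> 0 < b < c ->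
  (forall u, 0 < u <= b -> f u < 0) -> 0 < f c ->
  exists F, is_infimum (fun u => 0 < u /\ f u = 0) F /\ b <= F < c /\
            (forall u, 0 < u < F -> f u < 0).
Proof.
  intros Hf Hbc Hneg Hc.
  assert (Hb : f b < 0) by (apply Hneg; lra).
  assert (Hzeros : forall z, 0 < z /\ f z = 0 -> b <= z).
  { intros z [Hz Hfz]. destruct (Rle_or_lt z b) as [Hzb | Hbz]; [| lra].
    specialize (Hneg z (conj Hz Hzb)). lra. }
  destruct (zero_between f b c Hf ltac:(lra) Hb ltac:(lra)) as (z & Hz & Hfz).
  assert (Hz0 : 0 < z /\ f z = 0) by (split; [lra | exact Hfz]).
  destruct (infimum_exists _ z b Hz0 Hzeros) as (F & [HFlow HFgreat]).
  assert (HFz : F <= z) by exact (HFlow z Hz0).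
  assert (Hzc : z < c) by (destruct (proj2 Hz) as [? | ->]; lra).
  exists F. split; [split; assumption |]. split; [split; [exact (HFgreat b Hzeros) | lra] |].
  intros u Hu. destruct (Rle_or_lt u b) as [Hub | Hbu]; [apply Hneg; lra |].
  destruct (Rlt_or_le (f u) 0) as [Hfu | Hfu]; [exact Hfu | exfalso].
  destruct (zero_between f b u Hf Hbu Hb Hfu) as (z' & Hz' & Hfz').
  assert (F <= z') by (apply HFlow; split; [lra | exact Hfz']).
  lra.
Qed.

Lemma Rmult_ge_corners a b c d x y m : a <= x <= b -> c <= y <= d ->
  m <= a * c -> m <= a * d -> m <= b * c -> m <= b * d -> m <= x * y.
Proof.
  intros Hx Hy **.
  assert (a * y <= x * y \/ b * y <= x * y) by (destruct (Rle_dec 0 y); [left | right]; nra).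
  assert (a * c <= a * y \/ a * d <= a * y) by (destruct (Rle_dec 0 a); [left | right]; nra).
  assert (b * c <= b * y \/ b * d <= b * y) by (destruct (Rle_dec 0 b); [left | right]; nra).
  lra.
Qed.

Lemma Rmult_le_corners a b c d x y m : a <= x <= b -> c <= y <= d ->
  a * c <= m -> a * d <= m -> b * c <= m -> b * d <= m -> x * y <= m.
Proof.
  intros Hx Hy **. rewrite <- (Ropp_involutive (x * y)), Ropp_mult_distr_l.
  apply Ropp_le_cancel. rewrite Ropp_involutive.
  apply (Rmult_ge_corners (- b) (- a) c d); lra.
Qed.

(** * Rational interval arithmetic *)

Definition interval : Type := (Q * Q)%type.

Definition contains (I : interval) (x : R) : Prop := Q2R (fst I) <= x <= Q2R (snd I).

(* Endpoints are rounded outward to multiples of 2^-20, so that the rationals stay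
   small along the long chains of operations below. *)
Definition round_den : positive := 1048576.

Definition round_down (q : Q) : Q := Qfloor (q * (Zpos round_den # 1)) # round_den.

Definition round_up (q : Q) : Q := - round_down (- q).

Lemma round_down_le q : Q2R (round_down q) <= Q2R q.
Proof.
  apply Qle_Rle. unfold round_down.
  pose proof (Qfloor_le (q * (Zpos round_den # 1))) as H.
  unfold Qle in *. simpl in *. nia.
Qed.

Lemma round_up_ge q : Q2R q <= Q2R (round_up q).
Proof. unfold round_up. pose proof (round_down_le (- q)). rewrite Q2R_opp in *. lra. Qed.

Definition Iconst (q : Q) : interval := (q, q).

Definition Iadd (I J : interval) : interval :=
  (round_down (fst I + fst J), round_up (snd I + snd J)).

Definition Iopp (I : interval) : interval := (- snd I, - fst I)%Q.

Definition Isub (I J : interval) : interval := Iadd I (Iopp J).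

Definition Imul (I J : interval) : interval :=
  let '(a, b) := I in let '(c, d) := J in
  (round_down (Qmin (Qmin (a * c) (a * d)) (Qmin (b * c) (b * d))),
   round_up (Qmax (Qmax (a * c) (a * d)) (Qmax (b * c) (b * d)))).

Lemma contains_const q x : Q2R q = x -> contains (Iconst q) x.
Proof. intros <-. unfold contains. simpl. lra. Qed.

Lemma contains_add I J x y : contains I x -> contains J y -> contains (Iadd I J) (x + y).
Proof.
  unfold contains, Iadd. simpl. intros.
  pose proof (round_down_le (fst I + fst J)). pose proof (round_up_ge (snd I + snd J)).
  rewrite Q2R_plus in *. lra.
Qed.

Lemma contains_opp I x : contains I x -> contains (Iopp I) (- x).
Proof. unfold contains, Iopp. simpl. rewrite !Q2R_opp. lra. Qed.

Lemma contains_sub I J x y : contains I x -> contains J y -> contains (Isub I J) (x - y).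
Proof. intros. apply contains_add; [| apply contains_opp]; assumption. Qed.

Lemma contains_mul I J x y : contains I x -> contains J y -> contains (Imul I J) (x * y).
Proof.
  destruct I as [a b], J as [c d]. unfold contains, Imul. simpl. intros Hx Hy. split.
  - eapply Rle_trans; [apply round_down_le |].
    apply (Rmult_ge_corners (Q2R a) (Q2R b) (Q2R c) (Q2R d)); trivial; rewrite <- Q2R_mult;
      apply Qle_Rle; eauto using Qle_trans, Q.le_min_l, Q.le_min_r.
  - eapply Rle_trans; [| apply round_up_ge].
    apply (Rmult_le_corners (Q2R a) (Q2R b) (Q2R c) (Q2R d)); trivial; rewrite <- Q2R_mult;
      apply Qle_Rle; eauto using Qle_trans, Q.le_max_l, Q.le_max_r.
Qed.

Definition is_negative (I : interval) : bool := negb (Qle_bool 0 (snd I)).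

Lemma contains_negative I x : is_negative I = true -> contains I x -> x < 0.
Proof.
  unfold is_negative, contains. intros Hneg [_ Hx].
  apply Bool.negb_true_iff in Hneg.
  assert (Hlt : (snd I < 0)%Q) by (apply Qnot_le_lt; intro H; apply Qle_bool_iff in H; congruence).
  apply Qlt_Rlt in Hlt. rewrite RMicromega.Q2R_0 in Hlt. lra.
Qed.

Definition encloses_sincos (P : interval * interval) (x : R) : Prop :=
  contains (fst P) (sin x) /\ contains (snd P) (cos x).

Definition Irotate (P T : interval * interval) : interval * interval :=
  (Iadd (Imul (fst P) (snd T)) (Imul (snd P) (fst T)),
   Isub (Imul (snd P) (snd T)) (Imul (fst P) (fst T))).

Lemma encloses_rotate P T x t :
  encloses_sincos P x -> encloses_sincos T t -> encloses_sincos (Irotate P T) (x + t).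
Proof.
  intros [Hs Hc] [Ht Hct]. unfold encloses_sincos, Irotate. simpl.
  rewrite sin_plus, cos_plus.
  split; [apply contains_add | apply contains_sub]; apply contains_mul; assumption.
Qed.

Definition sincos_taylor (q : Q) : interval * interval :=
  ((q - q * q * q * (1 # 6), q - q * q * q * (1 # 6) + q * q * q * q * q * (1 # 120)),
   (1 - q * q * (1 # 2), 1 - q * q * (1 # 2) + q * q * q * q * (1 # 24)))%Q.

Lemma encloses_sincos_taylor q : 0 <= Q2R q <= 2 -> encloses_sincos (sincos_taylor q) (Q2R q).
Proof.
  intros Hq.
  destruct (sin_taylor_bounds (Q2R q)) as [Hs1 Hs2]; [lra |].
  destruct (cos_taylor_bounds (Q2R q)) as [Hc1 Hc2]; [lra |].
  unfold encloses_sincos, contains, sincos_taylor. simpl.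
  repeat rewrite ?Q2R_plus, ?Q2R_minus, ?Q2R_mult, ?RMicromega.Q2R_1.
  replace (Q2R (1 # 6)) with (/ 6) by (unfold Q2R; simpl; lra).
  replace (Q2R (1 # 120)) with (/ 120) by (unfold Q2R; simpl; lra).
  replace (Q2R (1 # 2)) with (/ 2) by (unfold Q2R; simpl; lra).
  replace (Q2R (1 # 24)) with (/ 24) by (unfold Q2R; simpl; lra).
  simpl in *. lra.
Qed.

Definition sincos_upto (q : Q) : interval * interval := ((0, q), (1 - q * q * (1 # 2), 1))%Q.

Lemma encloses_sincos_upto q t : 0 <= t <= Q2R q -> Q2R q <= 2 ->
  encloses_sincos (sincos_upto q) t.
Proof.
  intros Ht Hq.
  destruct (sin_taylor_bounds t) as [Hs1 Hs2]; [lra |].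
  destruct (cos_taylor_bounds t) as [Hc _]; [lra |].
  assert (Hsin : sin t <= t).
  { assert (0 <= t ^ 3 * (20 - t ^ 2)) by (apply Rmult_le_pos; [apply pow_le |]; nra). nra. }
  pose proof (COS_bound t).
  unfold encloses_sincos, contains, sincos_upto. simpl.
  rewrite Q2R_minus, Q2R_mult, Q2R_mult, RMicromega.Q2R_1, RMicromega.Q2R_0.
  replace (Q2R (1 # 2)) with (/ 2) by (unfold Q2R; simpl; lra).
  split; nra.
Qed.

(** * The function on (0, 3/4] *)

Lemma a010_double_angle u :
  a010 u = sin (2 * u) * (64 * u ^ 3 - 44 * u - 4 * u * cos u)
           + 12 * cos (2 * u) * (4 * u ^ 2 + sin (2 * u) ^ 2).
Proof.
  unfold a010.
  replace (6 * u) with (2 * u + 2 * (2 * u)) by ring.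
  rewrite cos_plus, (sin_2a (2 * u)), (cos_2a_sin (2 * u)).
  ring.
Qed.

Definition cos_taylor4 (x : R) : R := 1 - x ^ 2 / 2 + x ^ 4 / 24.

(* With x = 2u, and cos u replaced by 1 - u^2/2:
   64u^3 - 44u - 4u(1 - u^2/2) = 33/4 x^3 - 24x and 48u^2 = 12x^2. *)
Definition a010_majorant (x s : R) : R :=
  12 * cos_taylor4 x * s ^ 2 + (33 / 4 * x ^ 3 - 24 * x) * s + 12 * cos_taylor4 x * x ^ 2.

Lemma a010_le_majorant u : 0 < u <= 3 / 4 -> a010 u <= a010_majorant (2 * u) (sin (2 * u)).
Proof.
  intros Hu.
  destruct (sin_taylor_bounds (2 * u)) as [Hs _]; [lra |].
  destruct (cos_taylor_bounds (2 * u)) as [_ Hc]; [lra |].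
  destruct (cos_taylor_bounds u) as [Hcu _]; [lra |].
  assert (Hs0 : 0 <= sin (2 * u)) by nra.
  assert (Hcos_u : 0 <= sin (2 * u) * (u * (cos u - (1 - u ^ 2 / 2))))
    by (apply Rmult_le_pos; nra).
  assert (Hcos_2u : 0 <= (cos_taylor4 (2 * u) - cos (2 * u)) * (4 * u ^ 2 + sin (2 * u) ^ 2))
    by (apply Rmult_le_pos; unfold cos_taylor4; nra).
  rewrite a010_double_angle. unfold a010_majorant, cos_taylor4 in *.
  nra.
Qed.

Lemma a010_majorant_neg x s : 0 < x <= 3 / 2 ->
  x - x ^ 3 / 6 <= s <= x - x ^ 3 / 6 + x ^ 5 / 120 -> a010_majorant x s < 0.
Proof.
  intros Hx Hs.
  assert (Hy : 0 < x ^ 2 <= 9 / 4) by nra.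
  assert (Hx4 : 0 < x ^ 4) by (apply pow_lt; lra).
  set (y := x ^ 2) in Hy.
  assert (Plo : -15/4 + 47/24*y - y^2/3 + y^3/72 < 0) by nra.
  assert (Phi : -15/4 + 47/24*y - 191/480*y^2 + 143/3600*y^3 - 13/7200*y^4 + 1/28800*y^5 < 0)
    by nra.
  unfold a010_majorant.
  apply convex_quadratic_neg_between with (x - x ^ 3 / 6) (x - x ^ 3 / 6 + x ^ 5 / 120).
  - unfold cos_taylor4. nra.
  - exact Hs.
  - replace (12 * cos_taylor4 x * (x - x ^ 3 / 6) ^ 2 + (33 / 4 * x ^ 3 - 24 * x) * (x - x ^ 3 / 6)
      + 12 * cos_taylor4 x * x ^ 2)
      with (x ^ 4 * (-15/4 + 47/24*y - y^2/3 + y^3/72)) by (unfold y, cos_taylor4; field).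
    nra.
  - replace (12 * cos_taylor4 x * (x - x ^ 3 / 6 + x ^ 5 / 120) ^ 2
      + (33 / 4 * x ^ 3 - 24 * x) * (x - x ^ 3 / 6 + x ^ 5 / 120) + 12 * cos_taylor4 x * x ^ 2)
      with (x ^ 4 * (-15/4 + 47/24*y - 191/480*y^2 + 143/3600*y^3 - 13/7200*y^4 + 1/28800*y^5))
      by (unfold y, cos_taylor4; field).
    nra.
Qed.

Lemma a010_neg_near_0 u : 0 < u <= 3 / 4 -> a010 u < 0.
Proof.
  intros Hu.
  apply Rle_lt_trans with (1 := a010_le_majorant u Hu).
  apply a010_majorant_neg; [lra |].
  apply sin_taylor_bounds. lra.
Qed.

(** * Certified enclosures on [3/4, 59/20] *)

Lemma a010_sin_cos u :
  a010 u = 2 * (sin u * cos u) * (64 * (u * u * u) - 44 * u - 4 * (u * cos u))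
           + 12 * ((1 - 2 * (sin u * sin u))
                   * (4 * (u * u) + 2 * (sin u * cos u) * (2 * (sin u * cos u)))).
Proof. rewrite a010_double_angle, sin_2a, cos_2a_sin. ring. Qed.

Definition Ia010 (U : interval) (P : interval * interval) : interval :=
  let S := fst P in
  let C := snd P in
  let S2 := Imul (Iconst 2) (Imul S C) in
  let C2 := Isub (Iconst 1) (Imul (Iconst 2) (Imul S S)) in
  Iadd (Imul S2 (Isub (Isub (Imul (Iconst 64) (Imul (Imul U U) U)) (Imul (Iconst 44) U))
                      (Imul (Iconst 4) (Imul U C))))
       (Imul (Iconst 12) (Imul C2 (Iadd (Imul (Iconst 4) (Imul U U)) (Imul S2 S2)))).

Lemma contains_a010 U P u : contains U u -> encloses_sincos P u -> contains (Ia010 U P) (a010 u).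
Proof.
  intros HU [HS HC]. rewrite a010_sin_cos. unfold Ia010.
  repeat match goal with
  | |- contains (Isub _ _) _ => apply contains_sub
  | |- contains (Iadd _ _) _ => apply contains_add
  | |- contains (Imul _ _) _ => apply contains_mul
  | |- contains (Iconst _) _ => apply contains_const; unfold Q2R; simpl; lra
  | |- contains _ _ => assumption
  end.
Qed.

Definition step : Q := 1 # 40.

Definition grid (k : nat) : Q := Z.of_nat k # 40.

Lemma Q2R_step : Q2R step = 1 / 40.
Proof. unfold Q2R. simpl. lra. Qed.

Lemma Q2R_grid k : Q2R (grid k) = INR k / 40.
Proof. unfold grid, Q2R. simpl. rewrite INR_IZR_INZ. reflexivity. Qed.

Definition cell_enclosure (k : nat) (P : interval * interval) : interval :=
  Ia010 (grid k, grid (S k)) (Irotate P (sincos_upto step)).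

Lemma a010_neg_on_cell k P :
  is_negative (cell_enclosure k P) = true -> encloses_sincos P (INR k / 40) ->
  forall u, INR k / 40 <= u <= INR (S k) / 40 -> a010 u < 0.
Proof.
  intros Hcell HP u Hu.
  pose proof Q2R_step. rewrite S_INR in Hu.
  apply (contains_negative _ _ Hcell), contains_a010.
  - unfold contains. simpl. rewrite !Q2R_grid, S_INR. exact Hu.
  - replace u with (INR k / 40 + (u - INR k / 40)) by ring.
    apply encloses_rotate; [exact HP |].
    apply encloses_sincos_upto; lra.
Qed.

Definition sincos_step : interval * interval := sincos_taylor step.

Fixpoint cells_negative (n k : nat) (P : interval * interval) : bool :=
  match n with
  | O => true
  | S n => is_negative (cell_enclosure k P) && cells_negative n (S k) (Irotate P sincos_step)
  end.

(* Stated in this direction: the kernel then unfolds [cells_negative] instead of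
   [andb], which would evaluate the interval computation on symbolic arguments. *)
Lemma cells_negative_succ n k P : cells_negative (S n) k P =
  is_negative (cell_enclosure k P) && cells_negative n (S k) (Irotate P sincos_step).
Proof. reflexivity. Qed.

Lemma encloses_sincos_step k P :
  encloses_sincos P (INR k / 40) -> encloses_sincos (Irotate P sincos_step) (INR (S k) / 40).
Proof.
  intros HP.
  replace (INR (S k) / 40) with (INR k / 40 + Q2R step) by (rewrite S_INR, Q2R_step; lra).
  apply encloses_rotate; [exact HP |].
  apply encloses_sincos_taylor. rewrite Q2R_step. lra.
Qed.

Lemma a010_neg_on_cells n : forall k P, cells_negative n k P = true ->
  encloses_sincos P (INR k / 40) ->
  forall u, INR k / 40 <= u <= INR (k + n) / 40 -> (0 < n)%nat -> a010 u < 0.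
Proof.
  induction n as [| n IH]; intros k P Hcells HP u Hu Hn; [lia |].
  rewrite cells_negative_succ in Hcells. apply andb_prop in Hcells as [Hcell Hcells].
  destruct (Rle_or_lt u (INR (S k) / 40)) as [Hle | Hgt].
  - exact (a010_neg_on_cell k P Hcell HP u (conj (proj1 Hu) Hle)).
  - destruct n as [| n]; [rewrite Nat.add_1_r in Hu; lra |].
    apply (IH (S k) _ Hcells (encloses_sincos_step k P HP) u); [| lia].
    rewrite Nat.add_succ_comm. lra.
Qed.

Fixpoint sincos_grid (k : nat) : interval * interval :=
  match k with
  | O => (Iconst 0, Iconst 1)
  | S k => Irotate (sincos_grid k) sincos_step
  end.

Lemma encloses_sincos_grid k : encloses_sincos (sincos_grid k) (INR k / 40).
Proof.
  induction k as [| k IH].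
  - unfold encloses_sincos, contains. simpl. rewrite Rdiv_0_l, sin_0, cos_0.
    rewrite RMicromega.Q2R_0, RMicromega.Q2R_1. lra.
  - exact (encloses_sincos_step k _ IH).
Qed.

Lemma a010_cells_certificate : cells_negative 88 30 (sincos_grid 30) = true.
Proof. vm_compute. reflexivity. Qed.

Lemma a010_neg_middle u : 3 / 4 <= u <= 59 / 20 -> a010 u < 0.
Proof.
  intros Hu.
  apply (a010_neg_on_cells 88 30 _ a010_cells_certificate (encloses_sincos_grid 30)); [| lia].
  rewrite plus_INR. simpl. lra.
Qed.

(** * The first positive zero *)

Lemma a010_continuous : continuity a010.
Proof. unfold a010. reg. Qed.

Lemma a010_PI_pos : 0 < a010 PI.
Proof.
  unfold a010. rewrite sin_2PI, cos_2PI.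
  replace (6 * PI) with (0 + 2 * INR 3 * PI) by (simpl; ring).
  rewrite cos_period, cos_0.
  pose proof PI_RGT_0. nra.
Qed.

Lemma a010_neg_below u : 0 < u <= 59 / 20 -> a010 u < 0.
Proof.
  intros Hu. destruct (Rle_or_lt u (3 / 4)) as [Hsmall | Hlarge].
  - apply a010_neg_near_0. lra.
  - apply a010_neg_middle. lra.
Qed.

Theorem lemma5p3 :
  exists F : R,
    is_infimum a010_pos_zeros F /\
    3 * PI / 4 < F < PI /\
    (forall u : R, 0 < u < F -> a010 u < 0).
Proof.
  pose proof PI2_3_2. pose proof PI_le_68_21.
  destruct (first_positive_zero a010 (59 / 20) PI a010_continuous ltac:(lra)
              a010_neg_below a010_PI_pos) as (F & Hinf & HF & Hneg).
  exists F. split; [exact Hinf |]. split; [lra | exact Hneg].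
Qed.
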